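(* Let $G$ be a group generated by $x_1,\dots,x_n$, with finite commutator subgroup $C=[G,G]$, such that $G/C$ is free abelian of rank $n$ with basis the images of $x_1,\dots,x_n$. Let $P=X\cap\mathcal C_G(C)$ with $X=\{g_{\mathbf m}\in T: c_{\,x_1^{m_1}\cdots x_{k-1}^{m_{k-1}},\,x_k}=e \text{ for all } k=1,\dots,n\}$, and $Q=P\cap Z$, where $Z$ is the center of $G$. Then for $q\in G$: $q\in Q$ if and only if $q\,t=t\,q=(q\,t)^{ab}$ for every $t\in T$.
   Context: Notation: $\bar g=g^{-1}$, $c_{gh}=\bar g\,\bar h\,g\,h$; $\mathcal C_G(C)$ is the centralizer of $C$ in $G$. For $\mathbf r\in\mathbb Z^n$, $g_{\mathbf r}=x_1^{r_1}\cdots x_n^{r_n}$, and $T=\{g_{\mathbf r}\}$. Every $g\in G$ decomposes uniquely as $g=g_{\mathbf r}c$ with $c\in C$, and $g^{ab}$ denotes $g_{\mathbf r}$. *)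

From Stdlib Require Import ZArith List.

Section GroupDefs.
Context {G : Type} (mul : G -> G -> G) (inv : G -> G) (e : G).

Definition is_group : Prop :=
  (forall a b c, mul a (mul b c) = mul (mul a b) c) /\
  (forall a, mul e a = a /\ mul a e = a) /\
  (forall a, mul (inv a) a = e /\ mul a (inv a) = e).

Inductive generated (S : G -> Prop) : G -> Prop :=
| gen_one : generated S e
| gen_in : forall g, S g -> generated S g
| gen_mul : forall g h, generated S g -> generated S h -> generated S (mul g h)
| gen_inv : forall g, generated S g -> generated S (inv g).

Definition comm (g h : G) : G := mul (mul (mul (inv g) (inv h)) g) h.

Definition commutator_subgroup : G -> Prop :=
  generated (fun c => exists a b, c = comm a b).

Definition finite_set (S : G -> Prop) : Prop :=
  exists l : list G, forall g, S g -> In g l.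

Fixpoint npow (g : G) (k : nat) : G :=
  match k with O => e | S k => mul g (npow g k) end.

Definition zpow (g : G) (z : Z) : G :=
  match z with
  | Z0 => e
  | Zpos p => npow g (Pos.to_nat p)
  | Zneg p => inv (npow g (Pos.to_nat p))
  end.

(* gprod x r k = x_0^{r_0} x_1^{r_1} ... x_{k-1}^{r_{k-1}} (0-indexed);
   g_r = gprod x r n *)
Fixpoint gprod (x : nat -> G) (r : nat -> Z) (k : nat) : G :=
  match k with
  | O => e
  | S k => mul (gprod x r k) (zpow (x k) (r k))
  end.

Definition Tset (n : nat) (x : nat -> G) (t : G) : Prop :=
  exists r : nat -> Z, t = gprod x r n.

(* h is the abelian part g^{ab} of g : g = h c with h = g_r in T and c in C *)
Definition is_ab (n : nat) (x : nat -> G) (g h : G) : Prop :=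
  exists r : nat -> Z, h = gprod x r n /\ commutator_subgroup (mul (inv h) g).

Definition Xset (n : nat) (x : nat -> G) (g : G) : Prop :=
  exists m : nat -> Z, g = gprod x m n /\
    (forall k, (k < n)%nat -> comm (gprod x m k) (x k) = e).

Definition centralizes_C (g : G) : Prop :=
  forall c, commutator_subgroup c -> mul g c = mul c g.

Definition central (g : G) : Prop := forall h, mul g h = mul h g.

Definition Pset (n : nat) (x : nat -> G) (g : G) : Prop :=
  Xset n x g /\ centralizes_C g.

Definition Qset (n : nat) (x : nat -> G) (g : G) : Prop :=
  Pset n x g /\ central g.

End GroupDefs.

(** Write [g_r] for [x_0^{r_0} ... x_{n-1}^{r_{n-1}}].  If every prefix
    [g_m(k)] commutes with [x_k], then [g_r g_m = g_{r+m}] for every [r]; so a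
    central [q = g_m] in [X] multiplies [T] into itself.  Conversely, taking
    [t = e] gives [q = g_m], and [q] commutes with every generator, hence is
    central.  Since [x_k g_m] and [g_{e_k + m}] agree modulo [C], the
    independence of the [x_i] modulo [C] forces [x_k g_m = g_{e_k + m}] as
    soon as [x_k q] lies in [T]; cancelling the common factors [x_i^{m_i}]
    for [i > k], then [x_k^{m_k}], leaves [x_k g_m(k) = g_m(k) x_k]. *)

From Stdlib Require Import ZArith List Lia.

Section Group.

Context {G : Type} (mul : G -> G -> G) (inv : G -> G) (e : G).
Hypothesis Hgrp : is_group mul inv e.

Local Infix "·" := mul (at level 40, left associativity).
Local Notation C := (commutator_subgroup mul inv e).
Local Notation zpow := (zpow mul inv e).

Lemma mulgA a b c : a · (b · c) = a · b · c.
Proof. apply (proj1 Hgrp). Qed.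

Lemma mul1g a : e · a = a.
Proof. apply (proj1 (proj2 Hgrp) a). Qed.

Lemma mulg1 a : a · e = a.
Proof. apply (proj1 (proj2 Hgrp) a). Qed.

Lemma mulVg a : inv a · a = e.
Proof. apply (proj2 (proj2 Hgrp) a). Qed.

Lemma mulgV a : a · inv a = e.
Proof. apply (proj2 (proj2 Hgrp) a). Qed.

Lemma mulgI a b c : a · b = a · c -> b = c.
Proof.
  intro H. rewrite <- (mul1g b), <- (mul1g c), <- (mulVg a), <- !mulgA, H.
  reflexivity.
Qed.

Lemma mulIg a b c : b · a = c · a -> b = c.
Proof.
  intro H. rewrite <- (mulg1 b), <- (mulg1 c), <- (mulgV a), !mulgA, H.
  reflexivity.
Qed.

Lemma inv_unique a b : a · b = e -> b = inv a.
Proof. intro H. apply (mulgI a). rewrite H, mulgV. reflexivity. Qed.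

Lemma invgM a b : inv (a · b) = inv b · inv a.
Proof.
  symmetry. apply inv_unique.
  rewrite <- !mulgA, (mulgA b), mulgV, mul1g, mulgV. reflexivity.
Qed.

Lemma invgK a : inv (inv a) = a.
Proof. symmetry. apply inv_unique, mulVg. Qed.

Lemma invg1 : inv e = e.
Proof. symmetry. apply inv_unique, mul1g. Qed.

Definition commute a b := a · b = b · a.

Lemma commute1 a : commute a e.
Proof. unfold commute. rewrite mul1g, mulg1. reflexivity. Qed.

Lemma commuteV a b : commute a b -> commute a (inv b).
Proof.
  unfold commute. intro H. apply (mulgI b).
  rewrite mulgA, <- H, <- mulgA, mulgV, mulg1, mulgA, mulgV, mul1g. reflexivity.
Qed.

Lemma commuteM a b c : commute a b -> commute a c -> commute a (b · c).
Proof.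
  unfold commute. intros Hb Hc. rewrite mulgA, Hb, <- mulgA, Hc, mulgA.
  reflexivity.
Qed.

Lemma commute_npow a b k : commute a b -> commute a (npow mul e b k).
Proof.
  intro H. induction k as [|k IH]; simpl.
  - apply commute1.
  - apply commuteM; assumption.
Qed.

Lemma commute_zpow a b z : commute a b -> commute a (zpow b z).
Proof.
  intro H. destruct z; simpl.
  - apply commute1.
  - apply commute_npow, H.
  - apply commuteV, commute_npow, H.
Qed.

Lemma comm_eq1 a b : comm mul inv a b = e <-> commute a b.
Proof.
  assert (E : comm mul inv a b = inv (b · a) · (a · b)).
  { unfold comm. rewrite invgM, !mulgA. reflexivity. }
  unfold commute. rewrite E. split.
  - intro H. apply inv_unique in H. rewrite invgK in H. exact H.
  - intros ->. apply mulVg.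
Qed.

Lemma central_of_generators (S : G -> Prop) q :
  (forall h, generated mul inv e S h) -> (forall s, S s -> commute q s) ->
  central mul q.
Proof.
  intros Hgen HS h. induction (Hgen h).
  - apply commute1.
  - apply HS. assumption.
  - apply commuteM; assumption.
  - apply commuteV; assumption.
Qed.

Lemma zpow_of_nat g k : zpow g (Z.of_nat k) = npow mul e g k.
Proof. destruct k; simpl; [|rewrite SuccNat2Pos.id_succ]; reflexivity. Qed.

Lemma zpow_opp_nat g k : zpow g (- Z.of_nat k) = inv (npow mul e g k).
Proof.
  destruct k; simpl.
  - symmetry. apply invg1.
  - rewrite SuccNat2Pos.id_succ. reflexivity.
Qed.

Lemma zpow1 g : zpow g 1 = g.
Proof. apply mulg1. Qed.

Lemma zpow_succ g z : zpow g (Z.succ z) = g · zpow g z.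
Proof.
  destruct (Z_of_nat_complete_inf (Z.abs z) ltac:(lia)) as [k Hk].
  destruct (Z.abs_spec z) as [[_ Hz] | [Hneg Hz]]; rewrite Hz in Hk.
  - replace (Z.succ z) with (Z.of_nat (S k)) by lia. subst z.
    rewrite !zpow_of_nat. reflexivity.
  - replace z with (- Z.of_nat k)%Z by lia.
    destruct k as [|k]; [lia|].
    replace (Z.succ (- Z.of_nat (S k))) with (- Z.of_nat k)%Z by lia.
    rewrite !zpow_opp_nat. simpl. rewrite invgM.
    assert (Hg : commute g (inv (npow mul e g k))).
    { apply commuteV, commute_npow. reflexivity. }
    rewrite mulgA, Hg, <- mulgA, mulgV, mulg1. reflexivity.
Qed.

Lemma zpow_pred g z : zpow g (Z.pred z) = inv g · zpow g z.
Proof.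
  rewrite <- (Z.succ_pred z) at 2.
  rewrite zpow_succ, mulgA, mulVg, mul1g. reflexivity.
Qed.

Lemma zpowD g a b : zpow g (a + b) = zpow g a · zpow g b.
Proof.
  revert b. induction a as [|a IH|a IH] using Z.peano_ind; intro b.
  - simpl. rewrite mul1g. reflexivity.
  - rewrite Z.add_succ_l, !zpow_succ, IH, mulgA. reflexivity.
  - rewrite Z.add_pred_l, !zpow_pred, IH, mulgA. reflexivity.
Qed.

Definition congr_C a b := C (inv a · b).

Lemma congr_C_eq a b : a = b -> congr_C a b.
Proof. intros ->. unfold congr_C. rewrite mulVg. apply gen_one. Qed.

Lemma congr_C_sym a b : congr_C a b -> congr_C b a.
Proof.
  unfold congr_C. intro H. apply gen_inv in H. rewrite invgM, invgK in H.
  exact H.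
Qed.

Lemma congr_C_trans a b c : congr_C a b -> congr_C b c -> congr_C a c.
Proof.
  unfold congr_C. intros Hab Hbc. pose proof (gen_mul _ _ _ _ _ _ Hab Hbc) as H.
  rewrite <- mulgA, (mulgA b), mulgV, mul1g in H. exact H.
Qed.

Lemma congr_CMl a b c : congr_C a b -> congr_C (c · a) (c · b).
Proof.
  unfold congr_C. rewrite invgM, <- mulgA, (mulgA (inv c)), mulVg, mul1g.
  trivial.
Qed.

Lemma congr_CMr a b c : congr_C a b -> congr_C (a · c) (b · c).
Proof.
  unfold congr_C. intro H. rewrite invgM, <- mulgA, (mulgA (inv a)).
  set (y := inv a · b) in *.
  (* [C] is normal: [c^-1 y c = y [y, c]]. *)
  replace (inv c · (y · c)) with (y · comm mul inv y c)
    by (unfold comm; rewrite !mulgA, mulgV, mul1g; reflexivity).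
  apply gen_mul; [exact H|]. apply gen_in. eauto.
Qed.

Lemma congr_C_swap a b : congr_C (a · b) (b · a).
Proof.
  unfold congr_C. rewrite invgM.
  replace (inv b · inv a · (b · a)) with (comm mul inv b a)
    by (unfold comm; rewrite !mulgA; reflexivity).
  apply gen_in. eauto.
Qed.

Section Products.

Variable x : nat -> G.
Local Notation gp := (gprod mul inv e x).

Definition add_exp (r m : nat -> Z) : nat -> Z := fun i => (r i + m i)%Z.

Definition unit_exp (k : nat) : nat -> Z := fun i => if i =? k then 1%Z else 0%Z.

Lemma gprod_ext r s k : (forall i, i < k -> r i = s i) -> gp r k = gp s k.
Proof.
  induction k as [|k IH]; intro H; simpl; [reflexivity|].
  rewrite IH by (intros; apply H; lia). rewrite H by lia. reflexivity.
Qed.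

Lemma gprod0 k : gp (fun _ => 0%Z) k = e.
Proof. induction k as [|k IH]; simpl; [|rewrite IH, mulg1]; reflexivity. Qed.

Lemma gprod_unit_exp k j : gp (unit_exp k) j = if j <=? k then e else x k.
Proof.
  induction j as [|j IH]; [reflexivity|]. simpl gprod.
  rewrite IH. unfold unit_exp.
  destruct (Nat.eqb_spec j k) as [->|Hjk].
  - rewrite zpow1, Nat.leb_refl, mul1g.
    destruct (Nat.leb_spec (S k) k); [lia|reflexivity].
  - simpl zpow. rewrite mulg1.
    destruct (Nat.leb_spec j k), (Nat.leb_spec (S j) k); solve [lia | reflexivity].
Qed.

Lemma gprodD_congr_C r m k : congr_C (gp r k · gp m k) (gp (add_exp r m) k).
Proof.
  induction k as [|k IH]; simpl.
  - apply congr_C_eq, mulg1.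
  - unfold add_exp at 2. rewrite zpowD.
    set (A := gp r k) in *. set (B := gp m k) in *.
    set (Xr := zpow (x k) (r k)). set (Xm := zpow (x k) (m k)).
    apply congr_C_trans with (A · (Xr · B) · Xm).
    { apply congr_C_eq. rewrite !mulgA. reflexivity. }
    apply congr_C_trans with (A · (B · Xr) · Xm).
    { apply congr_CMr, congr_CMl, congr_C_swap. }
    apply congr_C_trans with (A · B · (Xr · Xm)).
    { apply congr_C_eq. rewrite !mulgA. reflexivity. }
    apply congr_CMr, IH.
Qed.

Lemma gprodD r m k :
  (forall j, j < k -> commute (gp m j) (x j)) ->
  gp r k · gp m k = gp (add_exp r m) k.
Proof.
  induction k as [|k IH]; intro H; simpl.
  - apply mulg1.
  - assert (Hc : commute (gp m k) (zpow (x k) (r k))).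
    { apply commute_zpow, H. lia. }
    rewrite <- !mulgA, (mulgA (zpow (x k) (r k))), <- Hc, <- mulgA, mulgA.
    rewrite IH by (intros; apply H; lia).
    unfold add_exp at 3. rewrite zpowD. reflexivity.
Qed.

Lemma gprod_cancel_tail a b r s j d :
  (forall i, j <= i < j + d -> r i = s i) ->
  a · gp r (j + d) = b · gp s (j + d) -> a · gp r j = b · gp s j.
Proof.
  induction d as [|d IH]; intros Hrs H.
  - rewrite Nat.add_0_r in H. exact H.
  - apply IH; [intros; apply Hrs; lia|].
    rewrite Nat.add_succ_r in H. simpl in H.
    rewrite (Hrs (j + d)) in H by lia.
    rewrite !mulgA in H. exact (mulIg _ _ _ H).
Qed.

Lemma commute_prefix_of_left_mul m k n : k < n ->
  x k · gp m n = gp (add_exp (unit_exp k) m) n -> commute (gp m k) (x k).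
Proof.
  intros Hk H.
  assert (Hlow : forall i, i < k -> add_exp (unit_exp k) m i = m i).
  { intros i Hi. unfold add_exp, unit_exp.
    destruct (Nat.eqb_spec i k); [lia|reflexivity]. }
  rewrite <- (mul1g (gp (add_exp (unit_exp k) m) n)) in H.
  replace n with (S k + (n - S k)) in H by lia.
  apply gprod_cancel_tail in H.
  2:{ intros i Hi. unfold add_exp, unit_exp.
      destruct (Nat.eqb_spec i k); [lia|reflexivity]. }
  simpl in H. rewrite mul1g, (gprod_ext _ m k Hlow) in H.
  unfold add_exp, unit_exp in H. rewrite Nat.eqb_refl, zpowD, zpow1 in H.
  rewrite !mulgA in H. symmetry. exact (mulIg _ _ _ H).
Qed.

Lemma commute_prefix_of_gprod n m k :
  (forall r s, congr_C (gp r n) (gp s n) -> forall i, i < n -> r i = s i) ->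
  k < n -> (exists s, x k · gp m n = gp s n) -> commute (gp m k) (x k).
Proof.
  intros Hindep Hk [s Hs].
  apply (commute_prefix_of_left_mul m k n Hk).
  rewrite Hs. apply gprod_ext. intros i Hi. symmetry. apply Hindep; [|exact Hi].
  apply congr_C_sym. rewrite <- Hs.
  replace (x k) with (gp (unit_exp k) n) at 1
    by (rewrite gprod_unit_exp; destruct (Nat.leb_spec n k); [lia|reflexivity]).
  apply gprodD_congr_C.
Qed.

End Products.

End Group.

Theorem proposition6 (G : Type) (mul : G -> G -> G) (inv : G -> G) (e : G)
  (n : nat) (x : nat -> G)
  (Hgrp : is_group mul inv e)
  (Hgen : forall g, generated mul inv e (fun h => exists i, (i < n)%nat /\ h = x i) g)
  (Hfin : finite_set (commutator_subgroup mul inv e))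
  (Hspan : forall g, exists r : nat -> Z,
      commutator_subgroup mul inv e (mul (inv (gprod mul inv e x r n)) g))
  (Hindep : forall r s : nat -> Z,
      commutator_subgroup mul inv e
        (mul (inv (gprod mul inv e x r n)) (gprod mul inv e x s n)) ->
      forall i, (i < n)%nat -> r i = s i) :
  forall q : G,
    Qset mul inv e n x q <->
    (forall t, Tset mul inv e n x t ->
       mul q t = mul t q /\ is_ab mul inv e n x (mul q t) (mul q t)).
Proof.
  intro q; split.
  - intros [[[m [-> HX]] _] Hcen] t [r ->].
    split; [apply Hcen|].
    exists (add_exp r m). split.
    + rewrite Hcen. apply gprodD; [exact Hgrp|].
      intros j Hj. apply (comm_eq1 mul inv e Hgrp), HX. lia.
    + rewrite (mulVg mul inv e Hgrp). apply gen_one.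
  - intro H.
    assert (Hx : forall k, k < n -> Tset mul inv e n x (x k)).
    { intros k Hk. exists (unit_exp k). rewrite (gprod_unit_exp mul inv e Hgrp).
      destruct (Nat.leb_spec n k); [lia|reflexivity]. }
    destruct (H e) as [_ [m [Hm _]]].
    { exists (fun _ => 0%Z). symmetry. exact (gprod0 mul inv e Hgrp x n). }
    rewrite (mulg1 mul inv e Hgrp) in Hm.
    assert (Hcen : central mul q).
    { apply (central_of_generators mul inv e Hgrp _ q Hgen).
      intros s [k [Hk ->]]. exact (proj1 (H _ (Hx k Hk))). }
    split; [split; [exists m; split; [exact Hm|] | intros c _; apply Hcen] | exact Hcen].
    intros k Hk. apply (comm_eq1 mul inv e Hgrp).
    apply (commute_prefix_of_gprod mul inv e Hgrp x n m k Hindep Hk).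
    destruct (H _ (Hx k Hk)) as [_ [s [Hs _]]].
    exists s. rewrite <- Hm, <- Hcen. exact Hs.
Qed.
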